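(* Let $n\geq1$ and $1\leq i<j\leq n$. In $M_n$, the right-lcm of $\rho_i$ and $\rho_j$ exists and equals $\rho_i\rho_n^{\,i}\rho_{j-i}=\rho_j\rho_n^{\,i}$.
   Context: $M_n$ denotes the monoid with generators $\rho_1,\dots,\rho_n$ and relations $\rho_1\rho_n\rho_i=\rho_{i+1}\rho_n$ for $1\leq i\leq n-1$. A right-lcm of $a,b$ is a common right-multiple of $a$ and $b$ (an element $ax=by$) that left-divides every common right-multiple of $a$ and $b$. *)

From mathcomp Require Import all_boot.
From Stdlib Require Import Relations.
Set Implicit Arguments. Unset Strict Implicit. Unset Printing Implicit Defensive.

(* Elements are represented by words over the letters 1..n (letter a = rho_a);
   equality in M_n is the congruence generated by the relations. *)

Definition letter (n a : nat) : bool := (0 < a <= n).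
Definition word (n : nat) (w : seq nat) : bool := all (letter n) w.

Inductive rel_step (n : nat) : seq nat -> seq nat -> Prop :=
| rel_step_intro : forall (u v : seq nat) (i : nat),
    1 <= i <= n.-1 ->
    rel_step n (u ++ [:: 1; n; i] ++ v) (u ++ [:: i.+1; n] ++ v).

Definition Meq (n : nat) : relation (seq nat) := clos_refl_sym_trans _ (rel_step n).

Definition ldiv (n : nat) (a b : seq nat) : Prop :=
  exists c, word n c /\ Meq n (a ++ c) b.

Definition is_right_lcm (n : nat) (a b m : seq nat) : Prop :=
  [/\ word n m, ldiv n a m, ldiv n b m &
      forall c, word n c -> ldiv n a c -> ldiv n b c -> ldiv n m c].

From mathcomp Require Import all_boot.
From Stdlib Require Import Relations Lia.
From mathcomp Require Import zify.
Set Implicit Arguments. Unset Strict Implicit. Unset Printing Implicit Defensive.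

(* The defining relation
   rho_1 rho_n rho_i = rho_{i+1} rho_n iterates (induction on i) to the
   identity  rho_i rho_n^i rho_{j-i} = rho_j rho_n^i  for 1 <= i < j <= n,
   which is the second half of the corollary.
   The heart of the file is a complete description of equal words with
   given first letters: if  h u = h' u'  in M_n then either h = h' and
   u = u' (left cancellation), or, say h < h', and there is d with
   u = rho_n^h rho_{h'-h} d  and  u' = rho_n^h d.  This relation between
   (h, u) and (h', u') is shown to be preserved along every derivation of
   an equality; transitivity of the relation needs cancellation for
   shorter words, so the invariant is proved by induction on the weight
   mu, which every relation preserves.  Applied to a common multiple
   rho_i a = rho_j b, the description says exactly that it is a right
   multiple of rho_i rho_n^i rho_{j-i}, which gives the right-lcm. *)

Section MonoidM.
Variable n : nat.

Lemma Meq_refl x : Meq n x x.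
Proof. exact: rst_refl. Qed.

Lemma Meq_sym x y : Meq n x y -> Meq n y x.
Proof. exact: rst_sym. Qed.

Lemma Meq_trans x y z : Meq n x y -> Meq n y z -> Meq n x z.
Proof. exact: rst_trans. Qed.

Lemma Meq_cong p s x y : Meq n x y -> Meq n (p ++ x ++ s) (p ++ y ++ s).
Proof.
elim=> [a b [u v i Hi] | a | a b _ IH | a b c _ IH1 _ IH2].
- apply: rst_step; have := @rel_step_intro n (p ++ u) (v ++ s) i Hi.
  by rewrite -!catA.
- exact: Meq_refl.
- exact: Meq_sym.
- exact: Meq_trans IH2.
Qed.

Lemma Meq_catl p x y : Meq n x y -> Meq n (p ++ x) (p ++ y).
Proof. by move=> H; have := Meq_cong p [::] H; rewrite !cats0. Qed.

Lemma Meq_cons h x y : Meq n x y -> Meq n (h :: x) (h :: y).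
Proof. exact: (Meq_catl [:: h]). Qed.

Lemma Meq_relation i v : 1 <= i <= n.-1 -> Meq n [:: 1, n, i & v] [:: i.+1, n & v].
Proof. by move=> Hi; apply: rst_step; exact: (@rel_step_intro n [::] v i Hi). Qed.

(* Both sides of a relation have weight 1 + n + i, so equal words have the
   same weight; this is the measure of the main induction. *)
Definition mu (w : seq nat) : nat := sumn (map (maxn 1) w).

Lemma mu_cons a w : mu (a :: w) = maxn 1 a + mu w.
Proof. by []. Qed.

Lemma mu_cat a b : mu (a ++ b) = mu a + mu b.
Proof. by rewrite /mu map_cat sumn_cat. Qed.

Lemma Meq_mu x y : Meq n x y -> mu x = mu y.
Proof.
elim=> [a b [u v i /andP[i_gt0 i_lt]] | a | a b _ -> | a b c _ -> _ ->] //.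
rewrite !mu_cat /mu /= (maxn_idPr i_gt0) (maxn_idPr (ltn0Sn i)).
rewrite (maxn_idPr (_ : 1 <= n)); [rewrite (maxn_idPl (leqnn 1)); lia | lia].
Qed.

Lemma Meq_word x y : Meq n x y -> word n x = word n y.
Proof.
elim=> [a b [u v i /andP[i_gt0 i_lt]] | a | a b _ -> | a b c _ -> _ ->] //.
have letters : [&& letter n i, letter n 1, letter n n & letter n i.+1].
  by rewrite /letter; apply/and4P; split; apply/andP; split; lia.
by case/and4P: letters; rewrite /word !all_cat /= => -> -> -> ->.
Qed.

Lemma word_nseq k : 1 <= n -> word n (nseq k n).
Proof. by move=> n_gt0; rewrite /word all_nseq /letter n_gt0 leqnn orbT. Qed.

Lemma nseq_cat_sub a b w : a <= b -> nseq a n ++ nseq (b - a) n ++ w = nseq b n ++ w.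
Proof. by move=> ab; rewrite catA -nseqD subnKC. Qed.

Lemma rho_identity i j : 1 <= i -> i < j -> j <= n ->
  Meq n (i :: nseq i n ++ [:: j - i]) (j :: nseq i n).
Proof.
elim: i j => [|i IH] j // _ ij jn.
have rel_j k : Meq n [:: 1, n, j.-1 & nseq k n] (j :: n :: nseq k n).
  by rewrite -{2}(ltn_predK ij); apply: Meq_relation; lia.
case: i IH ij => [|i] IH ij; first by rewrite /= subn1; exact: (rel_j 0).
have -> : j - i.+2 = j.-1 - i.+1 by lia.
have unfold_head : Meq n (i.+2 :: nseq i.+2 n ++ [:: j.-1 - i.+1])
                          [:: 1, n, i.+1 & nseq i.+1 n ++ [:: j.-1 - i.+1]].
  by apply/Meq_sym/Meq_relation; lia.
apply: Meq_trans unfold_head (Meq_trans (Meq_catl [:: 1; n] (IH j.-1 _ _ _)) (rel_j _)); lia.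
Qed.

Lemma rho_identity_ctx i j p e : 1 <= i -> i < j -> j <= n ->
  Meq n (p ++ i :: nseq i n ++ (j - i) :: e) (p ++ j :: nseq i n ++ e).
Proof. by move=> h1 h2 h3; have := Meq_cong p e (rho_identity h1 h2 h3); rewrite /= -!catA. Qed.

Definition below (h : nat) (u : seq nat) (h' : nat) (u' : seq nat) : Prop :=
  [/\ 1 <= h, h < h', h' <= n &
   exists d, Meq n u (nseq h n ++ (h' - h) :: d) /\ Meq n u' (nseq h n ++ d)].

Definition head_rel (h : nat) (u : seq nat) (h' : nat) (u' : seq nat) : Prop :=
  (h = h' /\ Meq n u u') \/ below h u h' u' \/ below h' u' h u.

Definition word_rel (x y : seq nat) : Prop :=
  match x, y with
  | [::], [::] => True
  | h :: u, h' :: u' => head_rel h u h' u'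
  | _, _ => False
  end.

Definition word_rel_upto (N : nat) : Prop :=
  forall x y, mu x < N -> Meq n x y -> word_rel x y.

Lemma below_irrefl h u v : ~ below h u h v.
Proof. by case=> _ /[!ltnn]. Qed.

Lemma below_Meql h u h' u' v : Meq n u v -> below h u h' u' -> below h v h' u'.
Proof.
move=> uv [h1 h2 h3 [d [D1 D2]]]; split=> //; exists d.
by split=> //; exact: Meq_trans (Meq_sym uv) D1.
Qed.

Lemma below_Meqr h u h' u' v : Meq n u' v -> below h u h' u' -> below h u h' v.
Proof.
move=> uv [h1 h2 h3 [d [D1 D2]]]; split=> //; exists d.
by split=> //; exact: Meq_trans (Meq_sym uv) D2.
Qed.

Lemma word_rel_sym x y : word_rel x y -> word_rel y x.
Proof.
case: x => [|h u]; case: y => [|h' u'] //=.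
by case=> [[-> /Meq_sym uu] | [L | L]]; [left | right; right | right; left].
Qed.

Section Transitivity.
Variable N : nat.
Hypothesis IH : word_rel_upto N.

Lemma cancel_letter h u v : mu (h :: u) < N -> Meq n (h :: u) (h :: v) -> Meq n u v.
Proof. by move=> hm hq; case: (IH hm hq) => [[_ //] | [/below_irrefl | /below_irrefl]]. Qed.

Lemma cancel_nseq k u v : mu (nseq k n ++ u) < N ->
  Meq n (nseq k n ++ u) (nseq k n ++ v) -> Meq n u v.
Proof.
elim: k => [//|k IHk] /= hm hq; apply: IHk; last exact: cancel_letter hq.
by move: hm; rewrite mu_cons; lia.
Qed.

Lemma below_of_lt h u h' u' : mu (h :: u) < N -> Meq n (h :: u) (h' :: u') -> h < h' ->
  below h u h' u'.
Proof.
move=> hm hq hl; case: (IH hm hq) => [[E _] | [// | [_ H _ _]]].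
- by move: hl; rewrite E ltnn.
- by move: (ltn_trans hl H); rewrite ltnn.
Qed.

Lemma below_trans h1 u1 h2 u2 h3 u3 : mu u2 < N ->
  below h1 u1 h2 u2 -> below h2 u2 h3 u3 -> below h1 u1 h3 u3.
Proof.
move=> hm [a1 a2 a3 [d [D1 D2]]] [b1 b2 b3 [e [E1 E2]]].
have Hd : Meq n d (nseq (h2 - h1) n ++ (h3 - h2) :: e).
  apply: (@cancel_nseq h1); first by rewrite -(Meq_mu D2).
  by rewrite nseq_cat_sub 1?ltnW //; exact: Meq_trans (Meq_sym D2) E1.
split; [by [] | lia | by [] | exists (nseq (h2 - h1) n ++ e); split].
- apply: Meq_trans D1 (Meq_trans (Meq_catl _ (Meq_cons _ Hd)) _).
  have -> : h3 - h2 = h3 - h1 - (h2 - h1) by lia.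
  by apply: rho_identity_ctx; lia.
- by rewrite nseq_cat_sub 1?ltnW.
Qed.

Lemma below_common_upper a x b y c z : mu z < N -> below a x c z -> below b y c z ->
  (a < b -> below a x b y) /\ (a = b -> Meq n x y).
Proof.
move=> hm [a1 a2 a3 [d [D1 D2]]] [b1 b2 b3 [e [E1 E2]]]; split=> ab; last subst b.
- have Hd : Meq n d (nseq (b - a) n ++ e).
    apply: (@cancel_nseq a); first by rewrite -(Meq_mu D2).
    by rewrite nseq_cat_sub 1?ltnW //; exact: Meq_trans (Meq_sym D2) E2.
  split; [lia | lia | lia | exists (nseq (b - a) n ++ (c - b) :: e); split].
  + apply: Meq_trans D1 (Meq_trans (Meq_catl _ (Meq_cons _ Hd)) (Meq_sym _)).
    have -> : c - b = c - a - (b - a) by lia.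
    by apply: rho_identity_ctx; lia.
  + by rewrite nseq_cat_sub 1?ltnW.
- have Hd : Meq n d e.
    apply: (@cancel_nseq a); first by rewrite -(Meq_mu D2).
    exact: Meq_trans (Meq_sym D2) E2.
  exact: Meq_trans D1 (Meq_trans (Meq_catl _ (Meq_cons _ Hd)) (Meq_sym E1)).
Qed.

Lemma below_common_lower a x b y c z : mu z < N -> below c z a x -> below c z b y ->
  (a < b -> below a x b y) /\ (a = b -> Meq n x y).
Proof.
move=> hm [a1 a2 a3 [d [D1 D2]]] [b1 b2 b3 [e [E1 E2]]].
have He : Meq n ((a - c) :: d) ((b - c) :: e).
  apply: (@cancel_nseq c); first by rewrite -(Meq_mu D1).
  exact: Meq_trans (Meq_sym D1) E1.
have hm' : mu ((a - c) :: d) < N by move: hm; rewrite (Meq_mu D1) mu_cat; lia.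
split=> ab; last subst b.
- have [_ _ _ [f [F1 F2]]] := @below_of_lt _ _ (b - c) _ hm' He ltac:(lia).
  split; [lia | lia | lia | exists f; split].
  + apply: Meq_trans D2 (Meq_trans (Meq_catl _ F1) _).
    by rewrite nseq_cat_sub 1?ltnW // (_ : b - c - (a - c) = b - a); [exact: Meq_refl | lia].
  + apply: Meq_trans E2 (Meq_trans (Meq_catl _ F2) _).
    by rewrite nseq_cat_sub 1?ltnW //; exact: Meq_refl.
- have Hde := cancel_letter hm' He.
  exact: Meq_trans D2 (Meq_trans (Meq_catl _ Hde) (Meq_sym E2)).
Qed.

Lemma head_rel_trans h1 u1 h2 u2 h3 u3 : mu u2 < N ->
  head_rel h1 u1 h2 u2 -> head_rel h2 u2 h3 u3 -> head_rel h1 u1 h3 u3.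
Proof.
move=> hm [[<- M1] | [L1 | L1]] [[<- M2] | [L2 | L2]].
- by left; split=> //; exact: Meq_trans M2.
- by right; left; exact: below_Meql (Meq_sym M1) L2.
- by right; right; exact: below_Meqr (Meq_sym M1) L2.
- by right; left; exact: below_Meqr M2 L1.
- by right; left; exact: below_trans L1 L2.
- case: (ltngtP h1 h3) => c.
  + by right; left; case: (below_common_upper hm L1 L2) => /(_ c).
  + by right; right; case: (below_common_upper hm L2 L1) => /(_ c).
  + by left; split=> //; case: (below_common_upper hm L1 L2) => _ /(_ c).
- by right; right; exact: below_Meql M2 L1.
- case: (ltngtP h1 h3) => c.
  + by right; left; case: (below_common_lower hm L1 L2) => /(_ c).
  + by right; right; case: (below_common_lower hm L2 L1) => /(_ c).
  + by left; split=> //; case: (below_common_lower hm L1 L2) => _ /(_ c).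
- by right; right; exact: below_trans L2 L1.
Qed.

(* The invariant is preserved by every step of a derivation: a relation
   applied at the front is an instance of below, one applied inside keeps
   the first letter. *)
Lemma word_rel_upto_succ : word_rel_upto N.+1.
Proof.
move=> x y hm hq; elim: hq hm.
- move=> a b [[|h u] v i Hi] _ /=.
  + right; left; split; [lia | lia | lia | exists v; split].
    * by rewrite /= subn1; exact: Meq_refl.
    * exact: Meq_refl.
  + by left; split=> //; apply: rst_step; exact: rel_step_intro.
- by case=> [|h u] _ //=; left; split=> //; exact: Meq_refl.
- by move=> a b hab IHab hm; apply/word_rel_sym/IHab; rewrite (Meq_mu hab).
- move=> a b c hab IH1 hbc IH2 hm.
  have hm2 : mu b < N.+1 by rewrite -(Meq_mu hab).
  have r1 := IH1 hm; have r2 := IH2 hm2; move: r1 r2 hm2.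
  case: a {hm hab IH1 IH2} => [|h1 u1]; case: b {hbc} => [|h2 u2] //;
    case: c => [|h3 u3] //= r1 r2 hm2.
  by apply: head_rel_trans r1 r2; move: hm2; rewrite mu_cons; lia.
Qed.

End Transitivity.

Lemma Meq_word_rel x y : Meq n x y -> word_rel x y.
Proof.
have upto N : word_rel_upto N by elim: N => [x' y' // | N IH]; exact: word_rel_upto_succ.
by move=> H; exact: (upto (mu x).+1 x y (ltnSn _) H).
Qed.

Lemma common_multiple_factor i j a b : i < j -> word n a ->
  Meq n (i :: a) (j :: b) ->
  exists d, word n d /\ Meq n (i :: nseq i n ++ (j - i) :: d) (i :: a).
Proof.
move=> ij wa /Meq_word_rel /=.
case=> [[E _] | [[_ _ _ [d [D1 _]]] | [_ L _ _]]].
- by move: ij; rewrite E ltnn.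
- exists d; split; last exact/Meq_cons/Meq_sym.
  by move: (Meq_word D1); rewrite wa /word all_cat /= => /esym/and3P[].
- by move: (ltn_trans L ij); rewrite ltnn.
Qed.

End MonoidM.

Theorem corollary4p10 (n i j : nat) :
  1 <= n -> 1 <= i -> i < j -> j <= n ->
  is_right_lcm n [:: i] [:: j] ([:: i] ++ nseq i n ++ [:: j - i]) /\
  Meq n ([:: i] ++ nseq i n ++ [:: j - i]) ([:: j] ++ nseq i n).
Proof.
move=> n_gt0 i_gt0 ij jn.
have identity := rho_identity i_gt0 ij jn.
have w_pow := word_nseq i n_gt0.
have w_diff : word n [:: j - i] by rewrite /word /= /letter andbT; apply/andP; lia.
have w_tail : word n (nseq i n ++ [:: j - i]) by rewrite /word all_cat; apply/andP.
split=> //; split.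
- by apply/andP; split; [rewrite /letter i_gt0; lia | exact: w_tail].
- by exists (nseq i n ++ [:: j - i]); split; last exact: Meq_refl.
- by exists (nseq i n); split=> //; exact: Meq_sym.
- move=> c _ [a [wa Ma]] [b [_ Mb]].
  have [d [wd Md]] := common_multiple_factor ij wa (Meq_trans Ma (Meq_sym Mb)).
  by exists d; split=> //; rewrite /= -catA; exact: Meq_trans Md Ma.
Qed.
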